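(* Let $P:\mathcal C^{op}\to\mathbf{Heyt}$ be a weak hyperdoctrine with full weak comprehensions and comprehensive diagonals, such that $\Psi_{\mathcal C}$ is a weak hyperdoctrine. Suppose that for every arrow $f$ of $\mathcal C$ the left adjoint $\exists_f$ is stable under double negation, i.e. $\exists_f=\neg\neg\exists_f$, and that $[\{\bot_A\}]$ is the bottom element of $\Psi_{\mathcal C}(A)$ for every $A$. Then the composite $[\{-\}]\circ L:\Psi_{\mathcal C}\to\Psi_{\mathcal C}$ is double negation: for every $f:X\to A$ it maps $[f]$ to $\neg\neg[f]$.
   Context: A weak hyperdoctrine is an elementary doctrine (equality predicates $\delta_A$, written $=_A$) over a weakly cartesian closed base with Heyting fibres and reindexing, and left and right adjoints $\exists,\forall$ to reindexing along product projections satisfying Beck–Chevalley. For any $f:A\to B$, $\exists_f:P(A)\to P(B)$ is the left adjoint of $P_f$, given by $\exists_f(\alpha)(b)=\exists a:A.[f(a)=_Bb\wedge\alpha(a)]$. A weak comprehension of $\alpha\in P(A)$ is an arrow $\{\alpha\}:X\to A$ with $\top\le P_{\{\alpha\}}(\alpha)$ through which every $f$ with $\top\le P_f(\alpha)$ factors; full weak comprehensions: all exist and $\alpha\le\beta$ whenever $\{\alpha\}$ factors through $\{\beta\}$. Comprehensive diagonals: $f=g$ whenever $\top\vdash f(x)=_Yg(x)$. $\Psi_{\mathcal C}$ sends $A$ to the poset reflection of $\mathcal C/A$ (elements $[f]$), with reindexing by weak pullback. The natural transformations $L:\Psi_{\mathcal C}\to P$ and $[\{-\}]:P\to\Psi_{\mathcal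 C}$ are $L_A([f:X\to A])=\exists_f(\top_X)$ and $[\{-\}]_A(\alpha)=[\{\alpha\}]$; $\neg\neg$ is computed in the Heyting algebra $\Psi_{\mathcal C}(A)$. *)

Set Implicit Arguments.
Unset Strict Implicit.

Record category := Category {
  ob : Type;
  hom : ob -> ob -> Type;
  idm : forall A, hom A A;
  comp : forall A B D, hom B D -> hom A B -> hom A D;
  comp_id_l : forall A B (f : hom A B), comp (idm B) f = f;
  comp_id_r : forall A B (f : hom A B), comp f (idm A) = f;
  comp_assoc : forall A B D E (h : hom D E) (g : hom B D) (f : hom A B),
      comp h (comp g f) = comp (comp h g) f }.
Arguments idm {c} A : rename.
Arguments comp {c A B D} _ _ : rename.

Record wcc_data (C : category) := {
  term : ob C;
  bang : forall X, hom X term;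
  prod : ob C -> ob C -> ob C;
  p1 : forall A B, hom (prod A B) A;
  p2 : forall A B, hom (prod A B) B;
  pair : forall X A B, hom X A -> hom X B -> hom X (prod A B);
  wexp : ob C -> ob C -> ob C;            (* wexp A B = weak exponential B^A *)
  wev : forall A B, hom (prod (wexp A B) A) B;
  wlam : forall X A B, hom (prod X A) B -> hom X (wexp A B) }.
Arguments term {C} W : rename.
Arguments bang {C} W X : rename.
Arguments prod {C} W _ _ : rename.
Arguments p1 {C} W A B : rename.
Arguments p2 {C} W A B : rename.
Arguments pair {C} W {X A B} _ _ : rename.
Arguments wexp {C} W _ _ : rename.
Arguments wev {C} W A B : rename.
Arguments wlam {C} W {X A B} _ : rename.

Record is_wcc (C : category) (W : wcc_data C) : Prop := {
  term_unique : forall X (f : hom X (term W)), f = bang W X;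
  pair_p1 : forall X A B (f : hom X A) (g : hom X B), comp (p1 W A B) (pair W f g) = f;
  pair_p2 : forall X A B (f : hom X A) (g : hom X B), comp (p2 W A B) (pair W f g) = g;
  pair_unique : forall X A B (h : hom X (prod W A B)),
      pair W (comp (p1 W A B) h) (comp (p2 W A B) h) = h;
  (* weak exponentials: existence (not uniqueness) of the transpose *)
  wexp_beta : forall X A B (f : hom (prod W X A) B),
      comp (wev W A B) (pair W (comp (wlam W f) (p1 W X A)) (p2 W X A)) = f }.

Record doctrine_data (C : category) (W : wcc_data C) := {
  fib : ob C -> Type;
  le : forall A, fib A -> fib A -> Prop;
  top : forall A, fib A;
  bot : forall A, fib A;
  meet : forall A, fib A -> fib A -> fib A;
  join : forall A, fib A -> fib A -> fib A;
  impl : forall A, fib A -> fib A -> fib A;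
  rdx : forall A B, hom A B -> fib B -> fib A;
  exq : forall X A, fib (prod W X A) -> fib X;
  allq : forall X A, fib (prod W X A) -> fib X;
  eqp : forall A, fib (prod W A A) }.
Arguments fib {C W} D _ : rename.
Arguments le {C W} D {A} _ _ : rename.
Arguments top {C W} D A : rename.
Arguments bot {C W} D A : rename.
Arguments meet {C W} D {A} _ _ : rename.
Arguments join {C W} D {A} _ _ : rename.
Arguments impl {C W} D {A} _ _ : rename.
Arguments rdx {C W} D {A B} _ _ : rename.
Arguments exq {C W} D {X A} _ : rename.
Arguments allq {C W} D {X A} _ : rename.
Arguments eqp {C W} D A : rename.

Section Doctrines.
Context (C : category) (W : wcc_data C) (D : doctrine_data W).

Definition deq A (x y : fib D A) : Prop := le D x y /\ le D y x.

Definition neg A (x : fib D A) : fib D A := impl D x (bot D A).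

Definition prodmap Y X A (f : hom Y X) : hom (prod W Y A) (prod W X A) :=
  pair W (comp f (p1 W Y A)) (p2 W Y A).

Record is_weak_hyperdoctrine : Prop := {
  le_refl : forall A (x : fib D A), le D x x;
  le_trans : forall A (x y z : fib D A), le D x y -> le D y z -> le D x z;
  top_max : forall A (x : fib D A), le D x (top D A);
  bot_min : forall A (x : fib D A), le D (bot D A) x;
  meet_glb : forall A (x y z : fib D A), le D z (meet D x y) <-> (le D z x /\ le D z y);
  join_lub : forall A (x y z : fib D A), le D (join D x y) z <-> (le D x z /\ le D y z);
  impl_adj : forall A (x y z : fib D A), le D z (impl D x y) <-> le D (meet D z x) y;
  rdx_mono : forall A B (f : hom A B) x y, le D x y -> le D (rdx D f x) (rdx D f y);
  rdx_id : forall A (x : fib D A), deq (rdx D (idm A) x) x;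
  rdx_comp : forall A B E (f : hom A B) (g : hom B E) x,
      deq (rdx D (comp g f) x) (rdx D f (rdx D g x));
  rdx_top : forall A B (f : hom A B), deq (rdx D f (top D B)) (top D A);
  rdx_bot : forall A B (f : hom A B), deq (rdx D f (bot D B)) (bot D A);
  rdx_meet : forall A B (f : hom A B) x y,
      deq (rdx D f (meet D x y)) (meet D (rdx D f x) (rdx D f y));
  rdx_join : forall A B (f : hom A B) x y,
      deq (rdx D f (join D x y)) (join D (rdx D f x) (rdx D f y));
  rdx_impl : forall A B (f : hom A B) x y,
      deq (rdx D f (impl D x y)) (impl D (rdx D f x) (rdx D f y));
  exq_adj : forall X A (a : fib D (prod W X A)) (b : fib D X),
      le D (exq D a) b <-> le D a (rdx D (p1 W X A) b);
  allq_adj : forall X A (a : fib D (prod W X A)) (b : fib D X),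
      le D b (allq D a) <-> le D (rdx D (p1 W X A) b) a;
  exq_BC : forall Y X A (f : hom Y X) (a : fib D (prod W X A)),
      deq (rdx D f (exq D a)) (exq D (rdx D (prodmap A f) a));
  allq_BC : forall Y X A (f : hom Y X) (a : fib D (prod W X A)),
      deq (rdx D f (allq D a)) (allq D (rdx D (prodmap A f) a));
  (* elementary structure (Maietti-Rosolini) *)
  eq_refl : forall A, le D (top D A) (rdx D (pair W (idm A) (idm A)) (eqp D A));
  eq_adj : forall X A (a : fib D (prod W X A)) (b : fib D (prod W (prod W X A) A)),
      le D (meet D (rdx D (p1 W (prod W X A) A) a)
                   (rdx D (pair W (comp (p2 W X A) (p1 W (prod W X A) A))
                                  (p2 W (prod W X A) A)) (eqp D A))) b
      <-> le D a (rdx D (pair W (idm (prod W X A)) (p2 W X A)) b) }.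

(** P(A) are posets (P lands in Heyt) *)
Definition fibres_antisymmetric : Prop :=
  forall A (x y : fib D A), le D x y -> le D y x -> x = y.

(** exists_f (alpha)(b) = exists a:A. [ f(a) =_B b /\ alpha(a) ] *)
Definition exist_along A B (f : hom A B) (a : fib D A) : fib D B :=
  exq D (meet D (rdx D (pair W (comp f (p2 W B A)) (p1 W B A)) (eqp D B))
                (rdx D (p2 W B A) a)).

Definition comprehensive_diagonals : Prop :=
  forall X Y (f g : hom X Y),
    le D (top D X) (rdx D (pair W f g) (eqp D Y)) -> f = g.

(** slices C/A and their preorder (poset reflection = quotient by mutual le) *)
Definition slice A := { X : ob C & hom X A }.
Definition slice_le A (s t : slice A) : Prop :=
  exists h : hom (projT1 s) (projT1 t), comp (projT2 t) h = projT2 s.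
Definition slice_eq A (s t : slice A) : Prop := slice_le s t /\ slice_le t s.

Record full_weak_comprehensions (cmp : forall A, fib D A -> slice A) : Prop := {
  cmp_sound : forall A (a : fib D A), le D (top D _) (rdx D (projT2 (cmp A a)) a);
  cmp_weak_univ : forall A (a : fib D A) Y (f : hom Y A),
      le D (top D Y) (rdx D f a) ->
      exists h : hom Y (projT1 (cmp A a)), comp (projT2 (cmp A a)) h = f;
  cmp_full : forall A (a b : fib D A), slice_le (cmp A a) (cmp A b) -> le D a b }.

Definition Lmap A (s : slice A) : fib D A := exist_along (projT2 s) (top D (projT1 s)).

End Doctrines.
Arguments slice C A : clear implicits.
Arguments full_weak_comprehensions {C W} D cmp.
Arguments exist_along {C W} D {A B} f a.
Arguments neg {C W} D {A} x.

Definition wpb_data (C : category) :=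
  forall A B X (k : hom B A) (f : hom X A), { V : ob C & (hom V B * hom V X)%type }.

Definition is_weak_pullbacks (C : category) (wpb : wpb_data C) : Prop :=
  forall A B X (k : hom B A) (f : hom X A),
    comp k (fst (projT2 (wpb A B X k f))) = comp f (snd (projT2 (wpb A B X k f))) /\
    forall Z (u : hom Z B) (v : hom Z X), comp k u = comp f v ->
      exists h : hom Z (projT1 (wpb A B X k f)),
        comp (fst (projT2 (wpb A B X k f))) h = u /\
        comp (snd (projT2 (wpb A B X k f))) h = v.

Definition slice_rdx (C : category) (wpb : wpb_data C) A B (k : hom A B)
  (s : slice C B) : slice C A :=
  existT _ (projT1 (wpb B A (projT1 s) k (projT2 s)))
           (fst (projT2 (wpb B A (projT1 s) k (projT2 s)))).

(** Psi_C with fibres the slices preordered by factorization, reindexing by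
    weak pullback, and the remaining structure supplied as data. *)
Definition Psi_doctrine (C : category) (W : wcc_data C) (wpb : wpb_data C)
  (ptop pbot : forall A, slice C A)
  (pmeet pjoin pimpl : forall A, slice C A -> slice C A -> slice C A)
  (pex pall : forall X A, slice C (prod W X A) -> slice C X)
  (peq : forall A, slice C (prod W A A)) : doctrine_data W :=
  {| fib := slice C; le := @slice_le C; top := ptop; bot := pbot;
     meet := pmeet; join := pjoin; impl := pimpl;
     rdx := @slice_rdx C wpb; exq := pex; allq := pall; eqp := peq |}.

Arguments Psi_doctrine {C} W wpb ptop pbot pmeet pjoin pimpl pex pall peq.


(* Full comprehension identifies {¬a} with the pseudo-complement of {a} in Psi_C: an arrow
   g factors through {¬a} exactly when every g∘k factoring through {a} has a domain with
   ⊤ ≤ ⊥, and such arrows are the ones below [{⊥}], the bottom of Psi_C.  The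
   pseudo-complement of [f] is {¬∃_f ⊤}: one inclusion is the unit [f] ≤ {∃_f ⊤}, the
   other uses comprehensive diagonals to turn a point of ∃_f ⊤ into an actual factorization
   through f.  Double-negation stability of ∃_f then gives {∃_f ⊤} = {¬¬∃_f ⊤} ≅ ¬¬[f]. *)

Set Implicit Arguments.
Unset Strict Implicit.

Section WeakCartesianClosed.
Variables (C : category) (W : wcc_data C).
Hypothesis HW : is_wcc W.

Lemma pair_comp Z Y A B (a : hom Y A) (b : hom Y B) (h : hom Z Y) :
  comp (pair W a b) h = pair W (comp a h) (comp b h).
Proof.
  rewrite <- (pair_unique HW (comp (pair W a b) h)).
  now rewrite !comp_assoc, (pair_p1 HW), (pair_p2 HW).
Qed.

End WeakCartesianClosed.

Section HeytingFibres.
Variables (C : category) (W : wcc_data C) (D : doctrine_data W).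
Hypothesis HD : is_weak_hyperdoctrine D.

Definition inconsistent Y := le D (top D Y) (bot D Y).

Lemma deq_trans A (x y z : fib D A) : deq x y -> deq y z -> deq x z.
Proof.
  intros [Hxy Hyx] [Hyz Hzy].
  split; [apply (le_trans HD) with y | apply (le_trans HD) with y]; assumption.
Qed.

Lemma meet_le_l A (x y : fib D A) : le D (meet D x y) x.
Proof. exact (proj1 (proj1 (meet_glb HD x y _) (le_refl HD _))). Qed.

Lemma meet_le_r A (x y : fib D A) : le D (meet D x y) y.
Proof. exact (proj2 (proj1 (meet_glb HD x y _) (le_refl HD _))). Qed.

Lemma meet_neg_le_bot A (x : fib D A) : le D (meet D (neg D x) x) (bot D A).
Proof. exact (proj1 (impl_adj HD x (bot D A) _) (le_refl HD _)). Qed.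

Lemma neg_antitone A (x y : fib D A) : le D x y -> le D (neg D y) (neg D x).
Proof.
  intro Hxy. apply (impl_adj HD).
  apply (le_trans HD) with (meet D (neg D y) y); [|apply meet_neg_le_bot].
  apply (meet_glb HD). split; [apply meet_le_l|].
  apply (le_trans HD) with x; [apply meet_le_r | exact Hxy].
Qed.

Lemma neg_deq A (x y : fib D A) : deq x y -> deq (neg D x) (neg D y).
Proof. intros [Hxy Hyx]. split; apply neg_antitone; assumption. Qed.

Lemma top_le_rdx_neg Y A (h : hom Y A) (a : fib D A) :
  le D (top D Y) (rdx D h (neg D a)) <-> le D (rdx D h a) (bot D Y).
Proof.
  split; intro H.
  - apply (le_trans HD) with (meet D (top D Y) (rdx D h a)).
    { apply (meet_glb HD). split; [apply (top_max HD) | apply (le_refl HD)]. }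
    apply (le_trans HD) with (rdx D h (bot D A)); [|apply (rdx_bot HD)].
    apply (impl_adj HD).
    apply (le_trans HD) with (rdx D h (neg D a)); [exact H | apply (rdx_impl HD)].
  - apply (le_trans HD) with (impl D (rdx D h a) (rdx D h (bot D A)));
      [|apply (rdx_impl HD)].
    apply (impl_adj HD).
    apply (le_trans HD) with (bot D Y); [|apply (bot_min HD)].
    apply (le_trans HD) with (rdx D h a); [apply meet_le_r | exact H].
Qed.

Hypothesis HW : is_wcc W.

Lemma exist_along_unit A B (f : hom A B) (a : fib D A) :
  le D a (rdx D f (exist_along D f a)).
Proof.
  set (e := pair W (comp f (p2 W B A)) (p1 W B A)).
  set (phi := meet D (rdx D e (eqp D B)) (rdx D (p2 W B A) a)).
  set (psi := rdx D (prodmap W A f) phi).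
  set (diag := pair W (idm A) (idm A)).
  change (le D a (rdx D f (exq D phi))).
  apply (le_trans HD) with (exq D psi); [|apply (exq_BC HD)].
  assert (Hunit : le D (rdx D diag psi) (exq D psi)).
  { apply (le_trans HD) with (rdx D diag (rdx D (p1 W A A) (exq D psi))).
    - apply (rdx_mono HD), (exq_adj HD), (le_refl HD).
    - apply (le_trans HD) with (rdx D (comp (p1 W A A) diag) (exq D psi));
        [apply (rdx_comp HD)|].
      unfold diag. rewrite (pair_p1 HW). apply (rdx_id HD). }
  apply (le_trans HD) with (rdx D diag psi); [|exact Hunit].
  apply (le_trans HD) with (rdx D (comp (prodmap W A f) diag) phi); [|apply (rdx_comp HD)].
  assert (Hpm : comp (prodmap W A f) diag = pair W f (idm A)).
  { unfold prodmap, diag.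
    now rewrite (pair_comp HW), <- comp_assoc, (pair_p1 HW), (pair_p2 HW), comp_id_r. }
  rewrite Hpm.
  apply (le_trans HD) with
    (meet D (rdx D (pair W f (idm A)) (rdx D e (eqp D B)))
            (rdx D (pair W f (idm A)) (rdx D (p2 W B A) a))); [|apply (rdx_meet HD)].
  apply (meet_glb HD). split.
  - assert (He : comp e (pair W f (idm A)) = comp (pair W (idm B) (idm B)) f).
    { unfold e. rewrite !(pair_comp HW), <- comp_assoc, (pair_p2 HW), (pair_p1 HW).
      now rewrite comp_id_l, comp_id_r. }
    apply (le_trans HD) with (rdx D (comp e (pair W f (idm A))) (eqp D B));
      [|apply (rdx_comp HD)].
    rewrite He.
    apply (le_trans HD) with (rdx D f (rdx D (pair W (idm B) (idm B)) (eqp D B)));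
      [|apply (rdx_comp HD)].
    apply (le_trans HD) with (rdx D f (top D B)); [apply (le_trans HD) with (top D A)|].
    + apply (top_max HD).
    + apply (rdx_top HD).
    + apply (rdx_mono HD), (eq_refl HD).
  - apply (le_trans HD) with (rdx D (comp (p2 W B A) (pair W f (idm A))) a);
      [|apply (rdx_comp HD)].
    rewrite (pair_p2 HW). apply (rdx_id HD).
Qed.

End HeytingFibres.

Section Comprehension.
Variables (C : category) (W : wcc_data C) (P : doctrine_data W).
Hypothesis HP : is_weak_hyperdoctrine P.
Variable cmp : forall A, fib P A -> slice C A.
Arguments cmp : clear implicits.
Hypothesis Hcmp : full_weak_comprehensions P cmp.

Lemma slice_le_cmp Y A (g : hom Y A) (a : fib P A) :
  slice_le (existT _ Y g) (cmp A a) <-> le P (top P Y) (rdx P g a).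
Proof.
  split.
  - intros [h Hh]. simpl in Hh. rewrite <- Hh.
    apply (le_trans HP) with (rdx P h (rdx P (projT2 (cmp A a)) a)); [|apply (rdx_comp HP)].
    apply (le_trans HP) with (rdx P h (top P _)); [apply (rdx_top HP)|].
    apply (rdx_mono HP), (cmp_sound Hcmp).
  - intro H. exact (cmp_weak_univ Hcmp H).
Qed.

Lemma slice_le_cmp_bot Y A (g : hom Y A) :
  slice_le (existT _ Y g) (cmp A (bot P A)) <-> inconsistent P Y.
Proof.
  unfold inconsistent. split; intro H.
  - apply (le_trans HP) with (rdx P g (bot P A)); [apply slice_le_cmp, H | apply (rdx_bot HP)].
  - apply slice_le_cmp.
    apply (le_trans HP) with (bot P Y); [exact H | apply (rdx_bot HP)].
Qed.

Lemma le_bot_of_cmp Y (a : fib P Y) :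
  (forall K (k : hom K Y), le P (top P K) (rdx P k a) -> inconsistent P K) ->
  le P a (bot P Y).
Proof.
  intro H. apply (cmp_full Hcmp).
  pose proof (cmp_sound Hcmp a) as Ha.
  destruct (cmp Y a) as [K k]. simpl in Ha. exact (proj2 (slice_le_cmp_bot k) (H K k Ha)).
Qed.

Lemma slice_le_cmp_neg Y A (g : hom Y A) (b : fib P A) :
  (forall K (k : hom K Y),
     slice_le (existT _ K (comp g k)) (cmp A b) -> inconsistent P K) ->
  slice_le (existT _ Y g) (cmp A (neg P b)).
Proof.
  intro H. apply slice_le_cmp, (top_le_rdx_neg HP), le_bot_of_cmp.
  intros K k Hk. apply (H K k), slice_le_cmp.
  apply (le_trans HP) with (rdx P k (rdx P g b)); [exact Hk | apply (rdx_comp HP)].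
Qed.

Hypotheses (HW : is_wcc W) (Hdiag : comprehensive_diagonals P).

Lemma rdx_exist_along_top_le_bot X A (f : hom X A) K (u : hom K A) :
  (forall E (c : hom E K) (x : hom E X), comp u c = comp f x -> inconsistent P E) ->
  le P (rdx P u (exist_along P f (top P X))) (bot P K).
Proof.
  intro H.
  set (e := pair W (comp f (p2 W A X)) (p1 W A X)).
  set (phi := meet P (rdx P e (eqp P A)) (rdx P (p2 W A X) (top P X))).
  change (le P (rdx P u (exq P phi)) (bot P K)).
  apply (le_trans HP) with (exq P (rdx P (prodmap W X u) phi)); [apply (exq_BC HP)|].
  apply (exq_adj HP).
  apply (le_trans HP) with (bot P (prod W K X)); [|apply (bot_min HP)].
  apply le_bot_of_cmp. intros E c Hc.
  apply (H E (comp (p1 W K X) c) (comp (p2 W K X) c)). symmetry. apply Hdiag.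
  assert (Hec : comp (comp e (prodmap W X u)) c
                = pair W (comp f (comp (p2 W K X) c)) (comp u (comp (p1 W K X) c))).
  { unfold e, prodmap. rewrite !(pair_comp HW), <- !comp_assoc.
    rewrite (comp_assoc (p2 W A X)), (comp_assoc (p1 W A X)), (pair_p1 HW), (pair_p2 HW).
    now rewrite <- comp_assoc. }
  rewrite <- Hec.
  apply (le_trans HP) with (rdx P c (rdx P (prodmap W X u) (rdx P e (eqp P A)))).
  - apply (le_trans HP) with (rdx P c (rdx P (prodmap W X u) phi)); [exact Hc|].
    apply (rdx_mono HP), (rdx_mono HP), (meet_le_l HP).
  - apply (le_trans HP) with (rdx P c (rdx P (comp e (prodmap W X u)) (eqp P A)));
      [apply (rdx_mono HP), (rdx_comp HP) | apply (rdx_comp HP)].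
Qed.

End Comprehension.

Section SubobjectDoctrine.
Variables (C : category) (W : wcc_data C) (P : doctrine_data W).
Hypotheses (HW : is_wcc W) (HP : is_weak_hyperdoctrine P).
Variable cmp : forall A, fib P A -> slice C A.
Arguments cmp : clear implicits.
Hypotheses (Hcmp : full_weak_comprehensions P cmp) (Hdiag : comprehensive_diagonals P).
Variables (wpb : wpb_data C) (ptop pbot : forall A, slice C A)
  (pmeet pjoin pimpl : forall A, slice C A -> slice C A -> slice C A)
  (pex pall : forall X A, slice C (prod W X A) -> slice C X)
  (peq : forall A, slice C (prod W A A)).
Arguments pmeet : clear implicits.

Local Notation Psi := (Psi_doctrine W wpb ptop pbot pmeet pjoin pimpl pex pall peq).

Hypotheses (HPsi : is_weak_hyperdoctrine Psi)
  (Hbot : forall A (s : slice C A), slice_le (cmp A (bot P A)) s).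

Lemma slice_le_pbot Y A (g : hom Y A) :
  slice_le (existT _ Y g) (pbot A) <-> inconsistent P Y.
Proof.
  split; intro H.
  - apply (proj1 (slice_le_cmp_bot HP Hcmp g)).
    apply (le_trans HPsi) with (pbot A); [exact H | apply (bot_min HPsi)].
  - apply (le_trans HPsi) with (cmp A (bot P A));
      [exact (proj2 (slice_le_cmp_bot HP Hcmp g) H) | apply Hbot].
Qed.

Lemma disjoint_le_cmp_neg A (s : slice C A) (a : fib P A) :
  slice_le (pmeet A s (cmp A a)) (pbot A) -> slice_le s (cmp A (neg P a)).
Proof.
  destruct s as [Y g]. intro H. apply (slice_le_cmp_neg HP Hcmp).
  intros K k Hk. apply (slice_le_pbot (comp g k)).
  apply (le_trans HPsi) with (pmeet A (existT _ Y g) (cmp A a)); [|exact H].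
  apply (meet_glb HPsi). split; [exists k; reflexivity | exact Hk].
Qed.

Lemma cmp_neg A (a : fib P A) : deq (D := Psi) (cmp A (neg P a)) (neg Psi (cmp A a)).
Proof.
  split.
  - apply (impl_adj HPsi).
    pose proof (meet_le_l HPsi (cmp A (neg P a)) (cmp A a)) as Hl.
    pose proof (meet_le_r HPsi (cmp A (neg P a)) (cmp A a)) as Hr.
    simpl in Hl, Hr |- *.
    destruct (pmeet A (cmp A (neg P a)) (cmp A a)) as [M h].
    apply slice_le_pbot.
    apply (le_trans HP) with (rdx P h a); [apply (slice_le_cmp HP Hcmp), Hr|].
    apply (top_le_rdx_neg HP), (slice_le_cmp HP Hcmp), Hl.
  - apply disjoint_le_cmp_neg, (meet_neg_le_bot HPsi).
Qed.

Lemma disjoint_le_cmp_neg_Lmap A (s t : slice C A) :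
  slice_le (pmeet A t s) (pbot A) -> slice_le t (cmp A (neg P (Lmap P s))).
Proof.
  destruct s as [X f], t as [Y g]. intro H. apply (slice_le_cmp_neg HP Hcmp).
  intros K k Hk. apply (slice_le_cmp HP Hcmp) in Hk.
  apply (le_trans HP) with (rdx P (comp g k) (Lmap P (existT _ X f))); [exact Hk|].
  apply (rdx_exist_along_top_le_bot HP Hcmp HW Hdiag).
  intros E c x Hcx. apply (slice_le_pbot (comp f x)).
  apply (le_trans HPsi) with (pmeet A (existT _ Y g) (existT _ X f)); [|exact H].
  apply (meet_glb HPsi). split.
  - exists (comp k c). simpl. now rewrite comp_assoc.
  - exists x. reflexivity.
Qed.

End SubobjectDoctrine.

Theorem proposition4p12
  (C : category) (W : wcc_data C) (HW : is_wcc W)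
  (P : doctrine_data W) (HP : is_weak_hyperdoctrine P)
  (HPpos : fibres_antisymmetric P)
  (cmp : forall A, fib P A -> slice C A)
  (Hcmp : full_weak_comprehensions P cmp)
  (Hdiag : comprehensive_diagonals P)
  (wpb : wpb_data C) (Hwpb : is_weak_pullbacks wpb)
  (ptop pbot : forall A, slice C A)
  (pmeet pjoin pimpl : forall A, slice C A -> slice C A -> slice C A)
  (pex pall : forall X A, slice C (prod W X A) -> slice C X)
  (peq : forall A, slice C (prod W A A))
  (HPsi : is_weak_hyperdoctrine
            (Psi_doctrine W wpb ptop pbot pmeet pjoin pimpl pex pall peq))
  (Hdn : forall A B (f : hom A B) (a : fib P A),
      exist_along P f a = neg P (neg P (exist_along P f a)))
  (Hbot : forall A (s : slice C A), slice_le (cmp A (bot P A)) s) :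
  forall X A (f : hom X A),
    slice_eq (cmp A (Lmap P (existT _ X f)))
             (neg (Psi_doctrine W wpb ptop pbot pmeet pjoin pimpl pex pall peq)
                (neg (Psi_doctrine W wpb ptop pbot pmeet pjoin pimpl pex pall peq)
                   (existT _ X f))).
Proof.
  intros X A f.
  set (Psi := Psi_doctrine W wpb ptop pbot pmeet pjoin pimpl pex pall peq).
  set (s := existT (fun Y => hom Y A) X f).
  assert (Hunit : slice_le s (cmp A (Lmap P s)))
    by exact (proj2 (slice_le_cmp HP Hcmp f _) (exist_along_unit HP HW f (top P X))).
  assert (Hcompl : deq (D := Psi) (cmp A (neg P (Lmap P s))) (neg Psi s)).
  { split.
    - apply (le_trans HPsi) with (neg Psi (cmp A (Lmap P s))).
      + apply (cmp_neg HP Hcmp HPsi Hbot).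
      + apply (neg_antitone HPsi), Hunit.
    - apply (disjoint_le_cmp_neg_Lmap HW HP Hcmp Hdiag HPsi Hbot), (meet_neg_le_bot HPsi). }
  change (Lmap P s) with (exist_along P f (top P X)).
  rewrite Hdn.
  exact (deq_trans HPsi (cmp_neg HP Hcmp HPsi Hbot _) (neg_deq HPsi Hcompl)).
Qed.
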